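(* For every even integer $t \ge 4$, the sequence $\left(\left\lfloor n^t/24 \right\rfloor\right)_{n \ge 1}$ is eventually prime-free.
   Context: A sequence $(a_n)_{n\ge 1}$ of positive integers is called eventually prime-free if there exists an index $n_0$ such that $a_n$ is composite for all $n \ge n_0$. (Here, as in the paper, this is understood as: only finitely many terms $a_n$ are prime.) *)

From mathcomp Require Import all_boot.

(* A sequence a : nat -> nat (indexed by n >= 1; the value at 0 is irrelevant)
   is eventually prime-free if only finitely many terms are prime, i.e.
   there is n0 such that a n is not prime for all n >= n0. *)
Definition eventually_prime_free (a : nat -> nat) : Prop :=
  exists n0 : nat, forall n : nat, n0 <= n -> ~~ prime (a n).

(** Write t = 2k and m = n^k, so that n^t / 24 = m^2 / 24.  Since k >= 2, m is
    odd or divisible by 4, so m is not 6 modulo 12, and for all such m the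
    residue of m^2 modulo 24 is a square s^2 with s <= 4.  Hence
    24 * (m^2 / 24) = (m - s)(m + s), and a prime p with 24 p = a b can have
    no factorisation with a, b > 24: p would divide one factor, forcing the
    other to divide 24. *)

From mathcomp Require Import all_boot zify.

Lemma not_prime_mul_eq (p d a b : nat) :
  p * d = a * b -> d < a -> d < b -> ~~ prime p.
Proof.
have not_dvd a' b' : p * d = a' * b' -> d < a' -> d < b' -> ~~ (p %| a').
  move=> def_pd lt_da lt_db; apply/negP => /dvdnP[c def_a].
  have p_gt0 : 0 < p by nia.
  have def_d : d = c * b'.
    by apply/eqP; rewrite -(eqn_pmul2l p_gt0) def_pd def_a mulnAC mulnC.
  have c_gt0 : 0 < c by nia.
  by move: lt_db; rewrite def_d ltnNge leq_pmull.
move=> def_pd lt_da lt_db; apply: contraL (dvdn_mulr d (dvdnn p)) => p_pr.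
rewrite def_pd Euclid_dvdM // negb_or (not_dvd a b) //=.
by apply: (not_dvd b a); rewrite // def_pd mulnC.
Qed.

Lemma sqr_mod24 (m : nat) :
  m %% 12 != 6 -> exists2 s, s <= 4 & m ^ 2 %% 24 = s ^ 2.
Proof.
have table : all (fun r => (r %% 12 != 6) ==>
                   has (fun s => r ^ 2 %% 24 == s ^ 2) (iota 0 5)) (iota 0 24).
  by [].
have m24_in : m %% 24 \in iota 0 24 by rewrite mem_iota ltn_mod.
move/allP/(_ _ m24_in)/implyP: table.
rewrite modnXm modn_dvdm // => /[apply] /hasP[s].
by rewrite mem_iota => /andP[_ lt_s5] /eqP; exists s.
Qed.

Lemma not_prime_sqr_div24 (m : nat) :
  28 < m -> m %% 12 != 6 -> ~~ prime (m ^ 2 %/ 24).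
Proof.
move=> m_gt28 /sqr_mod24[s le_s4 sqr_m].
apply: (@not_prime_mul_eq _ 24 (m - s) (m + s)); last 2 first; [lia | lia |].
have := divn_eq (m ^ 2) 24; rewrite sqr_m; nia.
Qed.

Lemma expn_mod4_neq2 (n k : nat) : 1 < k -> n ^ k %% 4 != 2.
Proof.
move=> lt1k; case/boolP: (odd n) => [odd_n | /negbTE even_n].
  have : odd (n ^ k) by rewrite oddX odd_n orbT.
  by apply: contraL => /eqP mod4; rewrite -(odd_mod _ (_ : odd 4 = false)) // mod4.
have dvd4 : 4 %| n ^ k.
  rewrite -(subnKC lt1k) expnD -(odd_double_half n) even_n add0n -mul2n.
  by rewrite dvdn_mulr // expnMn dvdn_mulr.
by rewrite (eqP dvd4).
Qed.

Theorem theorem6 (t : nat) (ht_even : ~~ odd t) (ht4 : 4 <= t) :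
  eventually_prime_free (fun n => n ^ t %/ 24).
Proof.
exists 29 => n le29n /=.
have def_t : t = t./2 * 2 by rewrite muln2 -[LHS]odd_double_half (negbTE ht_even).
have lt1k : 1 < t./2 by lia.
have le_n_nk : n <= n ^ t./2 by rewrite -[leqLHS]expn1 leq_pexp2l //; lia.
rewrite def_t expnM; apply: not_prime_sqr_div24; first exact: leq_trans le_n_nk.
have := expn_mod4_neq2 n _ lt1k; apply: contra => /eqP mod12.
by rewrite -(modn_dvdm _ (_ : 4 %| 12)) // mod12.
Qed.
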